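(* Let $m,n,k$ be positive integers with $k<n$, $A\in\mathbb{R}^{m\times n}$, $x^*\in\mathbb{R}^n$ with support $S^*$ satisfying $1\le|S^*|\le k$, $e\in\mathbb{R}^m$, $y=Ax^*+e$. Let $\mathcal{X}^0\in\mathbb{R}^n$, $\eta>0$, let $(S^t,x^t,\mathcal{X}^t)_{t\ge0}$ be generated by SEA, $b^t=u^t-\eta A^T(Ax^t-y)$ and $B=\sup_{t\in\mathbb{N}}\|b^t\|_\infty$. If $$B<\frac{1}{2\sum_{i\in S^*}\frac{1}{\eta|x^*_i|}},$$ then there exists an integer $t_s\le T'_{max}$ such that $S^*\subseteq S^{t_s}$, where $$T'_{max}=\frac{\sum_{i\in S^*}\frac{\max_{j\notin S^*}|\mathcal{X}^0_j|+|\mathcal{X}^0_i|}{\eta|x^*_i|}+k+1}{1-2B\sum_{i\in S^*}\frac{1}{\eta|x^*_i|}}.$$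
   Context: $S^*=\{i:x^*_i\neq0\}$. For $v\in\mathbb{R}^n$, $\mathrm{largest}_k(v)$ is the set of indices of the $k$ entries of $v$ with largest absolute value (ties broken by selecting the highest indices). For $S\subseteq\{1,\dots,n\}$, $A_S$ is the submatrix of columns indexed by $S$, $v_S$ the restriction of a vector to $S$, $A_S^\dagger$ the Moore–Penrose pseudoinverse of $A_S$. SEA with initialization $\mathcal{X}^0$ and step size $\eta$ generates, for $t=0,1,2,\dots$: $S^t=\mathrm{largest}_k(\mathcal{X}^t)$; $x^t_i=0$ for $i\notin S^t$ and $x^t_{S^t}=A_{S^t}^\dagger y$; $\mathcal{X}^{t+1}=\mathcal{X}^t-\eta A^T(Ax^t-y)$. The oracle direction is $u^t_i=-\eta x^*_i$ if $i\in S^*\setminus S^t$ and $u^t_i=0$ otherwise. *)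

From HB Require Import structures.
From mathcomp Require Import all_boot all_order all_algebra.
From mathcomp Require Import all_classical all_reals.
From mathcomp Require Import ereal.
Set Implicit Arguments. Unset Strict Implicit. Unset Printing Implicit Defensive.
Import Order.TTheory GRing.Theory Num.Theory.
Local Open Scope ring_scope.

Section SEA.
Variable R : realType.

Definition beats n (v : 'cV[R]_n) (j i : 'I_n) : bool :=
  (`|v i 0| < `|v j 0|) || ((`|v j 0| == `|v i 0|) && (i < j)%N).

(* largest_k(v): the k indices with largest |v_i|, ties broken by selecting
   the highest indices; i is selected iff fewer than k indices beat it. *)
Definition largest_k n (k : nat) (v : 'cV[R]_n) : {set 'I_n} :=
  [set i | #|[set j | beats v j i]| < k]%N.

Definition supp n (v : 'cV[R]_n) : {set 'I_n} := [set i | v i 0 != 0].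

Definition colsubS m n (A : 'M[R]_(m, n)) (S : {set 'I_n}) : 'M[R]_(m, #|S|) :=
  colsub (fun j : 'I_#|S| => enum_val j) A.

(* P is the Moore–Penrose pseudoinverse of M (the four Penrose conditions,
   which determine P uniquely) *)
Definition is_MP_pinv p q (M : 'M[R]_(p, q)) (P : 'M[R]_(q, p)) : Prop :=
  [/\ M *m P *m M = M, P *m M *m P = P,
      (M *m P)^T = M *m P & (P *m M)^T = P *m M].

Definition SEA_iterates m n (k : nat) (A : 'M[R]_(m, n)) (y : 'cV[R]_m)
    (eta : R) (S : nat -> {set 'I_n}) (x X : nat -> 'cV[R]_n) : Prop :=
  forall t : nat,
    [/\ S t = largest_k k (X t),
        (forall i, i \notin S t -> x t i 0 = 0),
        (exists P : 'M[R]_(#|S t|, m),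
            is_MP_pinv (colsubS A (S t)) P /\
            forall j : 'I_#|S t|, x t (enum_val j) 0 = (P *m y) j 0)
      & X t.+1 = X t - eta *: (A^T *m (A *m x t - y))].

Definition oracle n (eta : R) (xstar : 'cV[R]_n) (St : {set 'I_n}) : 'cV[R]_n :=
  \col_i (if (i \in supp xstar) && (i \notin St) then - eta * xstar i 0 else 0).

Definition norm_inf n (v : 'cV[R]_n) : R := \big[Num.max/0]_i `|v i 0|.

End SEA.

From HB Require Import structures.
From mathcomp Require Import all_boot all_order all_algebra.
From mathcomp Require Import all_classical all_reals.
From mathcomp Require Import ereal lra.
Import Order.TTheory GRing.Theory Num.Theory.
Local Open Scope classical_set_scope.
Local Open Scope ring_scope.

(* While a support index i is excluded from S^t, the update adds eta x*_i to
   X_i on top of a perturbation b^t_i with |b^t_i| <= B, so sg(x*_i) X_i gains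
   eta |x*_i| per exclusion and loses at most B per step. An excluded support
   index is dominated by some off-support index j (there are at most k support
   indices), and |X^t_j| <= max_j |X^0_j| + t B since the oracle vanishes off
   S*. Hence in t steps i is excluded at most
   (max_j |X^0_j| + |X^0_i| + 2 t B) / (eta |x*_i|) + 1 times. Every step
   before S* is covered excludes some support index, so summing these bounds
   over S* caps the cover time by T'_max, using 2 B sum_i 1/(eta |x*_i|) < 1. *)

Section SEA_support_recovery.
Context {R : realType}.

Lemma fine_ereal_sup_lt (f : nat -> R) (c : R) :
  (forall t, 0 <= f t) ->
  (ereal_sup [set (f t)%:E | t in [set: nat]] < c%:E)%E ->
  let s := fine (ereal_sup [set (f t)%:E | t in [set: nat]]) in
  [/\ 0 <= s, s < c & forall t, f t <= s].
Proof.
move=> f0 supc s; rewrite /s; set E := ereal_sup _ in supc *.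
have ub t : ((f t)%:E <= E)%E by apply: ereal_sup_ubound; exists t.
have E0 : (0 <= E)%E by apply: le_trans (ub 0%N); rewrite lee_fin.
have E_fin : E \is a fin_num.
  by rewrite ge0_fin_numE // (lt_le_trans supc) ?leey.
by split=> [||t]; rewrite -?lee_fin -?lte_fin fineK.
Qed.

Lemma notin_largest_k_dominated {n k} {v : 'cV[R]_n} {T : {set 'I_n}} {i} :
  (#|T| <= k)%N -> i \in T -> i \notin largest_k k v ->
  exists2 j, j \notin T & `|v i 0| <= `|v j 0|.
Proof.
move=> Tk iT; rewrite inE -leqNgt => k_beat.
have [/existsP [j /andP [beat_ji jT]] | ] :=
  boolP [exists j, beats v j i && (j \notin T)].
  exists j => //; move: beat_ji; rewrite /beats.
  by case/orP=> [/ltW // | /andP [/eqP -> _]].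
rewrite negb_exists => /forallP beaters_in_T.
have card_le : (#|[set j | beats v j i]%SET| <= #|T :\ i|)%N.
  apply/subset_leq_card/fintype.subsetP => j; rewrite !inE => beat_ji.
  have := beaters_in_T j; rewrite beat_ji negbK /= => ->; rewrite andbT.
  by apply: contraTneq beat_ji => ->; rewrite /beats ltxx ltnn andbF.
have k_le := leq_trans k_beat card_le.
by move: Tk; rewrite (cardsD1 i T) iT add1n ltnNge k_le.
Qed.

Lemma SEA_update_coord {m n k} {A : 'M[R]_(m, n)} {y : 'cV[R]_m} {eta : R}
    {S : nat -> {set 'I_n}} {x X : nat -> 'cV[R]_n} (xstar : 'cV[R]_n) t i :
  SEA_iterates k A y eta S x X ->
  X t.+1 i 0 = X t i 0
    + (oracle eta xstar (S t) - eta *: (A^T *m (A *m x t - y))) i 0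
    + (if (i \in supp xstar) && (i \notin S t) then eta * xstar i 0 else 0).
Proof.
move=> sea; have [_ _ _ ->] := sea t.
by rewrite !mxE; case: ifP => _; lra.
Qed.

Lemma increments_drift (z beta : nat -> R) (B : R) :
  (forall t, z t.+1 = z t + beta t) -> (forall t, `|beta t| <= B) ->
  forall t, `|z t| <= `|z 0%N| + t%:R * B.
Proof.
move=> zS betaB; elim=> [|t IH]; first by rewrite mul0r addr0.
rewrite zS -natr1 mulrDl mul1r.
by have := ler_normD (z t) (beta t); have := betaB t; lra.
Qed.

Lemma kicks_count_bound (z beta : nat -> R) (kick : nat -> bool) (a B M : R) :
  0 <= M ->
  (forall t, z t.+1 = z t + beta t + (if kick t then a else 0)) ->
  (forall t, `|beta t| <= B) ->
  (forall t, kick t -> `|z t| <= M + t%:R * B) ->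
  forall T, (\sum_(t < T) (kick t)%:R) * `|a|
            <= M + `|z 0%N| + 2 * T%:R * B + `|a|.
Proof.
move=> M0 zS betaB kick_small.
have B0 : 0 <= B := le_trans (normr_ge0 _) (betaB 0%N).
have sg_bounds v : - `|v| <= Num.sg a * v <= `|v|.
  rewrite -ler_norml normrM normr_sg.
  by case: (a != 0); rewrite ?mul1r ?mul0r.
have sg_a : Num.sg a * a = `|a| by rewrite -normrEsg.
have lower t :
    - `|z 0%N| + (\sum_(u < t) (kick u)%:R) * `|a| - t%:R * B
    <= Num.sg a * z t.
  elim: t => [|t IH].
    by rewrite big_ord0 !mul0r; case/andP: (sg_bounds (z 0%N)); lra.
  rewrite zS big_ord_recr /= -natr1 !mulrDl !mulrDr mul1r.
  case/andP: (sg_bounds (beta t)) => beta_lo _; have := betaB t.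
  by case: (kick t); rewrite ?mul1r ?mul0r ?mulr0 ?sg_a; lra.
elim=> [|T IH].
  rewrite big_ord0 !mul0r.
  by have := normr_ge0 (z 0%N); have := normr_ge0 a; lra.
rewrite big_ord_recr /= -natr1 mulrDl; case kickT: (kick T).
  have := lower T; have := kick_small T kickT.
  by case/andP: (sg_bounds (z T)); rewrite mul1r; lra.
by rewrite mul0r addr0; lra.
Qed.

Lemma horizon_le_sum_misses n (P : {set 'I_n}) (S : nat -> {set 'I_n}) T :
  (forall t : 'I_T, ~~ (P \subset S t)) ->
  T%:R <= \sum_(i in P) \sum_(t < T) (i \notin S t)%:R :> R.
Proof.
move=> missed; rewrite exchange_big /= -[T in T%:R]card_ord -sumr_const.
apply: ler_sum => t _; have [i iP iSt] := subsetPn (missed t).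
rewrite (bigD1 i) //= iSt lerDl.
by apply: sumr_ge0 => j _; rewrite ler0n.
Qed.

Lemma cover_time_bound n (P : {set 'I_n}) (S : nat -> {set 'I_n})
    (c K : 'I_n -> R) (B : R) (k : nat) :
  (#|P| <= k)%N -> 0 <= B ->
  (forall i, i \in P -> 0 < c i) -> (forall i, i \in P -> 0 <= K i) ->
  2 * B * \sum_(i in P) (c i)^-1 < 1 ->
  (forall i T, i \in P ->
     (\sum_(t < T) (i \notin S t)%:R) * c i <= K i + 2 * T%:R * B + c i) ->
  exists ts : nat,
    ts%:R <= (\sum_(i in P) K i / c i + k%:R + 1)
             / (1 - 2 * B * \sum_(i in P) (c i)^-1)
    /\ P \subset S ts.
Proof.
move=> Pk B0 c0 K0 small_B misses.
set sigma := \sum_(i in P) (c i)^-1; set C := \sum_(i in P) K i / c i.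
set Tmax := _ / _.
have D0 : 0 < 1 - 2 * B * sigma by rewrite subr_gt0.
have C0 : 0 <= C.
  by apply: sumr_ge0 => i iP; rewrite divr_ge0 ?K0 ?ltW ?c0.
have k0 : 0 <= k%:R :> R := ler0n _ _.
have Tmax0 : 0 <= Tmax by rewrite divr_ge0 ?ltW //; lra.
pose T := Num.truncn Tmax.
have [/existsP [ts hit] | ] := boolP [exists ts : 'I_T.+1, P \subset S ts].
  have T_le : T%:R <= Tmax by rewrite truncn_le.
  by exists ts; split => //; apply: le_trans T_le; rewrite ler_nat -ltnS.
rewrite negb_exists => /forallP /horizon_le_sum_misses cover; exfalso.
have per_i i : i \in P ->
    \sum_(t < T.+1) (i \notin S t)%:R
    <= K i / c i + 2 * T.+1%:R * B * (c i)^-1 + 1.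
  move=> iP; have ci0 := c0 i iP.
  rewrite -(ler_pM2r ci0) 2!mulrDl !divfK ?gt_eqF // mul1r.
  exact: misses.
have sum_le : T.+1%:R <= C + 2 * T.+1%:R * B * sigma + k%:R.
  apply: le_trans cover _; apply: le_trans (ler_sum _ per_i) _.
  by rewrite !big_split /= sumr_const -mulr_sumr lerD2l ler_nat.
have : Tmax * (1 - 2 * B * sigma) < T.+1%:R * (1 - 2 * B * sigma).
  by rewrite ltr_pM2r // truncnS_gt.
by rewrite divfK ?gt_eqF // !mulrBr !mulr1; lra.
Qed.

End SEA_support_recovery.

Theorem theoremC6 (R : realType) (m n k : nat)
    (A : 'M[R]_(m, n)) (xstar : 'cV[R]_n) (e : 'cV[R]_m) (eta : R)
    (S : nat -> {set 'I_n}) (x X : nat -> 'cV[R]_n) :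
  (0 < m)%N -> (0 < k)%N -> (k < n)%N ->
  (1 <= #|supp xstar|)%N -> (#|supp xstar| <= k)%N ->
  0 < eta ->
  SEA_iterates k A (A *m xstar + e) eta S x X ->
  let y := A *m xstar + e in
  let b := fun t : nat =>
    oracle eta xstar (S t) - eta *: (A^T *m (A *m x t - y)) in
  let B : \bar R := ereal_sup [set (norm_inf (b t))%:E | t in [set: nat]] in
  let sigma := \sum_(i in supp xstar) (eta * `|xstar i 0|)^-1 in
  (B < ((2 * sigma)^-1)%:E)%E ->
  let Tmax :=
    ((\sum_(i in supp xstar)
        (\big[Num.max/0]_(j | j \notin supp xstar) `|X 0%N j 0| + `|X 0%N i 0|)
          / (eta * `|xstar i 0|))
     + k%:R + 1) / (1 - 2 * fine B * sigma) in
  exists ts : nat, ts%:R <= Tmax /\ supp xstar \subset S ts.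
Proof.
move=> _ _ _ _ supp_k eta0 sea y b B sigma B_lt Tmax.
have [B0 B_lt' normb_le] := @fine_ereal_sup_lt _ (fun t => norm_inf (b t)) _
  (fun t => bigmax_ge_id _ _ _ _) B_lt.
have b_le t i : `|b t i 0| <= fine B := le_trans (le_bigmax _ _ _) (normb_le t).
pose M0 := \big[Num.max/0]_(j | j \notin supp xstar) `|X 0%N j 0|.
have off_supp_small j t :
    j \notin supp xstar -> `|X t j 0| <= M0 + t%:R * fine B.
  move=> j_off.
  have drift := increments_drift (fun u => X u j 0) _ _ _ (b_le ^~ j) t.
  apply: le_trans (drift _) _; last by rewrite lerD2r le_bigmax_cond.
  by move=> u; rewrite (SEA_update_coord xstar u j sea) (negbTE j_off) addr0.
have small_B : 2 * fine B * sigma < 1.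
  have : 0 <= sigma by apply: sumr_ge0 => i _; rewrite invr_ge0 mulr_ge0 // ltW.
  rewrite le_eqVlt => /orP [/eqP <- | sigma_pos]; first by rewrite mulr0 ltr01.
  by move: B_lt'; rewrite -div1r ltr_pdivlMr ?mulr_gt0 // => ?; lra.
rewrite /Tmax /sigma.
apply: (cover_time_bound _ _ _ (fun i => eta * `|xstar i 0|)
                               (fun i => M0 + `|X 0%N i 0|)) => //.
- by move=> i; rewrite inE => ?; rewrite mulr_gt0 ?normr_gt0.
- by move=> i _; rewrite addr_ge0 ?bigmax_ge_id.
move=> i T i_supp; rewrite -[eta]gtr0_norm // -normrM.
apply: (kicks_count_bound (fun t => X t i 0) _ (fun t => i \notin S t)
          _ _ _ (bigmax_ge_id _ _ _ _) _ (b_le ^~ i)).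
  by move=> t; rewrite (SEA_update_coord xstar t i sea) i_supp.
move=> t; have [-> _ _ _] := sea t.
case/(notin_largest_k_dominated supp_k i_supp) => j j_off ij.
by apply: le_trans ij _; apply: off_supp_small.
Qed.
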